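(* Let $X$ be a real Banach space. Consider: (1) $X$ is LUR. (2) $d(Q_{S_X}(x,\frac1n),Q_{S_X}(x',\frac1n))\to\|x-x'\|$ for every $x,x'\in S_X$. (3) $d(Q_{S_X}(x,\frac1n),Q_{S_X}(-x,\frac1n))\to2$ for every $x\in S_X$. Then $(1)\Rightarrow(2)\Rightarrow(3)$.
   Context: $B_X,S_X$ are the closed unit ball and unit sphere of $X$. For non-empty bounded $F$, $x\in X$, $\delta\ge0$: $r(F,x)=\sup_{y\in F}\|x-y\|$, $Q_F(x,\delta)=\{y\in F:\|x-y\|\ge r(F,x)-\delta\}$. For non-empty sets $A,B$, $d(A,B)=\inf\{\|a-b\|:a\in A,b\in B\}$. $X$ is LUR if $x_n\to x$ whenever $x\in S_X$, $(x_n)\subseteq S_X$ and $\|\frac{x_n+x}{2}\|\to1$. *)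

From HB Require Import structures.
From mathcomp Require Import all_boot all_order all_algebra.
From mathcomp Require Import all_classical all_reals all_analysis.
Set Implicit Arguments. Unset Strict Implicit. Unset Printing Implicit Defensive.
Import Order.TTheory GRing.Theory Num.Theory.
Import numFieldNormedType.Exports.
Local Open Scope classical_set_scope.
Local Open Scope ring_scope.

Definition unit_sphere {R : realType} {X : normedModType R} : set X :=
  [set x | `|x| = 1].

Definition rad {R : realType} {X : normedModType R} (F : set X) (x : X) : R :=
  sup [set `|x - y| | y in F].

Definition Qset {R : realType} {X : normedModType R} (F : set X) (x : X)
  (delta : R) : set X :=
  [set y | F y /\ rad F x - delta <= `|x - y|].

Definition setdist {R : realType} {X : normedModType R} (A B : set X) : R :=
  inf [set r | exists a b, A a /\ B b /\ r = `|a - b|].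

Definition LUR {R : realType} (X : normedModType R) : Prop :=
  forall (x : X) (xs : nat -> X), `|x| = 1 -> (forall n, `|xs n| = 1) ->
    (fun n => `|(2%:R^-1 : R) *: (xs n + x)|) @ \oo --> (1 : R) ->
    xs @ \oo --> x.

(* For a unit vector x, r(S_X, x) = 2, so Q_{S_X}(x, d) consists of the unit
   vectors y with ||x - y|| >= 2 - d; it always contains -x, which gives
   d(Q(x, d), Q(x', d)) <= ||x - x'||.  For y in Q(x, d) the midpoint of x and
   -y has norm at least 1 - d/2, so LUR makes Q(x, 1/n) collapse onto -x
   uniformly; hence all pairs in Q(x, 1/n) x Q(x', 1/n) are eventually at
   distance almost ||x - x'||.  (3) is (2) at x' = -x. *)

From Pilot Require Import Defs.
From HB Require Import structures.
From mathcomp Require Import all_boot all_order all_algebra.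
From mathcomp Require Import all_classical all_reals all_analysis.
From mathcomp Require Import lra.
Set Implicit Arguments. Unset Strict Implicit. Unset Printing Implicit Defensive.
Import Order.TTheory GRing.Theory Num.Theory.
Import numFieldNormedType.Exports.
Local Open Scope classical_set_scope.
Local Open Scope ring_scope.

Section SetDistance.
Variables (R : realType) (X : normedModType R).

Lemma distrN (x y : X) : `|- x - - y| = `|x - y|.
Proof. by rewrite -opprD normrN. Qed.

Lemma distr_opp (x : X) : `|x - - x| = 2 * `|x|.
Proof. by rewrite opprK -mulr2n normrMn mulr_natl. Qed.

Lemma setdist_le (A B : set X) (a b : X) : A a -> B b -> setdist A B <= `|a - b|.
Proof.
move=> Aa Bb; apply: ge_inf; last by exists a, b.
by exists 0 => _ [a' [b' [_ [_ ->]]]].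
Qed.

Lemma setdist_ge_near_points (A B : set X) (u v : X) (e : R) :
    A !=set0 -> B !=set0 ->
    (forall a, A a -> `|a - u| <= e) -> (forall b, B b -> `|b - v| <= e) ->
  `|u - v| - 2 * e <= setdist A B.
Proof.
move=> [a0 Aa0] [b0 Bb0] Au Bv; apply: lb_le_inf; first by exists `|a0 - b0|, a0, b0.
move=> _ [a [b [Aa [Bb ->]]]].
have := ler_distD a u v; have := ler_distD b a v.
by rewrite [`|u - a|]distrC; have := Au a Aa; have := Bv b Bb; lra.
Qed.

End SetDistance.

Section UnitSphere.
Variables (R : realType) (X : normedModType R).

Lemma unit_sphereN (x : X) : unit_sphere x -> unit_sphere (- x).
Proof. by rewrite /unit_sphere /= normrN. Qed.

Lemma unit_sphere_distr_le2 (x y : X) : unit_sphere x -> unit_sphere y -> `|x - y| <= 2.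
Proof. by move=> x1 y1; apply: le_trans (ler_normB _ _) _; rewrite x1 y1. Qed.

Lemma rad_unit_sphere (x : X) : unit_sphere x -> Defs.rad unit_sphere x = 2.
Proof.
move=> x1; have xN1 := unit_sphereN x1.
apply/le_anti/andP; split.
- apply: ge_sup; first by exists `|x - - x|; exists (- x).
  by move=> _ [y /(unit_sphere_distr_le2 x1) ? <-].
- apply: ub_le_sup; last by exists (- x) => //; rewrite distr_opp x1 mulr1.
  by exists 2 => _ [y /(unit_sphere_distr_le2 x1) ? <-].
Qed.

Lemma Qset_unit_sphere_opp (x : X) (d : R) :
  unit_sphere x -> 0 <= d -> Qset unit_sphere x d (- x).
Proof.
move=> x1 d0; split; first exact: unit_sphereN.
by rewrite rad_unit_sphere // distr_opp x1 mulr1 gerBl.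
Qed.

Lemma Qset_subset (F : set X) (x : X) (d d' : R) : d <= d' -> Qset F x d `<=` Qset F x d'.
Proof. by move=> dd' y [Fy Qy]; split=> //; apply: le_trans Qy; rewrite lerB. Qed.

Lemma setdist_Qset_unit_sphere_le (x x' : X) (d : R) :
    unit_sphere x -> unit_sphere x' -> 0 <= d ->
  setdist (Qset unit_sphere x d) (Qset unit_sphere x' d) <= `|x - x'|.
Proof.
move=> x1 x'1 d0; rewrite -distrN.
apply: setdist_le; exact: Qset_unit_sphere_opp.
Qed.

End UnitSphere.

Section LocallyUniformlyRotund.
Variables (R : realType) (X : normedModType R).
Hypothesis lurX : LUR X.

Lemma LUR_cvg_Qset_opp (x : X) (d : nat -> R) (a : nat -> X) :
    unit_sphere x -> d @ \oo --> 0 -> (forall n, Qset unit_sphere x (d n) (a n)) ->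
  a @ \oo --> - x.
Proof.
move=> x1 d0 Qa; apply/cvgNP; rewrite opprK.
apply: lurX => // [n|]; first by rewrite opprfctE normrN; case: (Qa n).
apply: (@squeeze_cvgr _ _ _ _ (fun n => 1 - d n / 2) (fun=> 1)).
- apply: nearW => n; have [an1 Qn] := Qa n.
  rewrite rad_unit_sphere // in Qn.
  have le2 := unit_sphere_distr_le2 x1 an1.
  rewrite normrZ ger0_norm ?invr_ge0 ?ler0n // opprfctE (addrC (- a n)).
  by apply/andP; split; lra.
- rewrite [X in _ --> X](_ : _ = 1 - 0 / 2); last by rewrite mul0r subr0.
  by apply: cvgB; [exact: cvg_cst | apply: cvgM d0 (cvg_cst _)].
- exact: cvg_cst.
Qed.

Lemma LUR_Qset_near_opp (x : X) (e : R) : unit_sphere x -> 0 < e ->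
  \forall n \near \oo, forall a, Qset unit_sphere x n.+1%:R^-1 a -> `|a - - x| <= e.
Proof.
move=> x1 e0; apply: contrapT => far.
have bad N : exists a, Qset unit_sphere x N.+1%:R^-1 a /\ e < `|a - - x|.
  apply: contrapT => nobad; apply: far; exists N => // n /= Nn a Qa.
  rewrite leNgt; apply/negP => ea; apply: nobad; exists a; split => //.
  by apply: Qset_subset Qa; rewrite lef_pV2 ?posrE // ler_nat ltnS.
have [a Qa] := choice bad.
have := LUR_cvg_Qset_opp x1 cvg_harmonic (fun n => (Qa n).1).
move=> /cvgrPdist_lt /(_ e e0) /filter_ex [n].
by rewrite distrC; case: (Qa n) => _ /lt_trans /[apply]; rewrite ltxx.
Qed.

End LocallyUniformlyRotund.

Theorem theorem3p13 (R : realType) (X : completeNormedModType R) :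
  (LUR X ->
     forall x x' : X, unit_sphere x -> unit_sphere x' ->
       (fun n : nat => setdist (Qset unit_sphere x (n.+1%:R^-1))
                               (Qset unit_sphere x' (n.+1%:R^-1)))
         @ \oo --> `|x - x'|)
  /\
  ((forall x x' : X, unit_sphere x -> unit_sphere x' ->
       (fun n : nat => setdist (Qset unit_sphere x (n.+1%:R^-1))
                               (Qset unit_sphere x' (n.+1%:R^-1)))
         @ \oo --> `|x - x'|) ->
   forall x : X, unit_sphere x ->
       (fun n : nat => setdist (Qset unit_sphere x (n.+1%:R^-1))
                               (Qset unit_sphere (- x) (n.+1%:R^-1)))
         @ \oo --> (2 : R)).
Proof.
split=> [lurX x x' x1 x'1 | Qdist x x1]; last first.
  by have := Qdist x (- x) x1 (unit_sphereN x1); rewrite distr_opp x1 mulr1.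
apply/cvgrPdist_le => e e0; have e20 : 0 < e / 2 by rewrite divr_gt0.
have := LUR_Qset_near_opp lurX x'1 e20; have := LUR_Qset_near_opp lurX x1 e20.
apply: filterS2 => n Qx Qx'.
have n0 : 0 <= n.+1%:R^-1 :> R by rewrite invr_ge0.
have Qne (y : X) : unit_sphere y -> Qset unit_sphere y n.+1%:R^-1 !=set0.
  by move=> y1; exists (- y); apply: Qset_unit_sphere_opp.
have up := setdist_Qset_unit_sphere_le x1 x'1 n0.
have low := setdist_ge_near_points (Qne _ x1) (Qne _ x'1) Qx Qx'.
rewrite distrN in low.
by rewrite ger0_norm ?subr_ge0 //; lra.
Qed.
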